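(* Let $n\ge 1$ and let $\|\cdot\|_L$ be one of the vectorized norms $L_1,L_2,L_\infty$ on $\mathbb{R}^{n\times n}$. Let $M\subset\mathbb{R}^{n\times n}$ be a set containing an open ball $B(a,c)=\{x:\|x-a\|_L<c\}$ whose radius $c$ is large enough that $B(a,c)$ contains a singular matrix of rank $n-1$. Let $F:\mathbb{R}^{n\times n}\to\mathbb{R}^{n\times n}$ be any polynomial Lipschitz continuous function. Then for every $E>0$ there exists an invertible matrix $x\in M$ such that $$\|\mathrm{Inv}(x)-F(x)\|_L>E.$$
   Context: $\mathrm{Inv}(x)=x^{-1}$ denotes matrix inversion, defined on invertible matrices. For $A=(a_{ij})\in\mathbb{R}^{n\times n}$ the norms are vectorized: $\|A\|_{L_1}=\sum_{i,j}|a_{ij}|$, $\|A\|_{L_2}=(\sum_{i,j}|a_{ij}|^2)^{1/2}$, $\|A\|_{L_\infty}=\max_{i,j}|a_{ij}|$; $\mathbb{R}^{n\times n}$ is identified with $\mathbb{R}^{n^2}$. A function $f:\mathbb{R}^{n_1}\to\mathbb{R}^{n_2}$ is called polynomial Lipschitz continuous with respect to norms $\|\cdot\|_{L^+}$, $\|\cdot\|_{L^*}$ (chosen among $L_1,L_2,L_\infty$) if there exist a nonnegative integer $N$ and real polynomials $f_0,\dots,f_N$ in two variables such that for all $x,y$, $\|f(x)-f(y)\|_{L^*}\le \sum_{i=0}^{N} f_i(\|x\|_{L^+},\|y\|_{L^+})\|x-y\|_{L^+}^{i}$. *)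

From HB Require Import structures.
From mathcomp Require Import all_boot all_order all_algebra.
From mathcomp Require Import reals.
Set Implicit Arguments. Unset Strict Implicit. Unset Printing Implicit Defensive.
Import Order.TTheory GRing.Theory Num.Theory.
Local Open Scope ring_scope.

Inductive Lnorm_kind := L1 | L2 | Linf.

Definition mnorm {R : realType} {n : nat} (L : Lnorm_kind) (A : 'M[R]_n) : R :=
  match L with
  | L1 => \sum_(i < n) \sum_(j < n) `|A i j|
  | L2 => Num.sqrt (\sum_(i < n) \sum_(j < n) `|A i j| ^+ 2)
  | Linf => \big[Num.max/0]_(i < n) \big[Num.max/0]_(j < n) `|A i j|
  end.

(* Real polynomial in two variables (s, t), represented in {poly {poly R}}:
   inner variable s, outer variable t. *)
Definition eval2 {R : realType} (p : {poly {poly R}}) (s t : R) : R :=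
  (p.[t%:P]).[s].

Definition poly_lipschitz {R : realType} {n : nat} (Lp Ls : Lnorm_kind)
  (f : 'M[R]_n -> 'M[R]_n) : Prop :=
  exists (N : nat) (fs : nat -> {poly {poly R}}),
    forall x y : 'M[R]_n,
      mnorm Ls (f x - f y) <=
      \sum_(i < N.+1) eval2 (fs i) (mnorm Lp x) (mnorm Lp y) * mnorm Lp (x - y) ^+ i.

From HB Require Import structures.
From mathcomp Require Import all_boot all_order all_algebra.
From mathcomp Require Import reals.
From mathcomp Require Import ring lra.
Import Order.TTheory GRing.Theory Num.Theory.

Local Open Scope ring_scope.

(* Let x0 in the ball be singular and let v be a nonzero row with v x0 = 0.
   For small t > 0 avoiding the finitely many eigenvalues of -x0, the matrix
   x = x0 + t I is invertible, lies in the ball, and v = t (v x^-1), so some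
   entry of x^-1 has size at least |v_j| / (t sum_k |v_k|), which is
   unbounded as t -> 0.  Meanwhile F stays bounded near x0, because a
   polynomial Lipschitz function is locally bounded. *)

Section EntrywiseNorms.
Context {R : realType} {n : nat}.
Implicit Types (L : Lnorm_kind) (A B : 'M[R]_n).

Lemma ler_sum_term {I : finType} (G : I -> R) i :
  (forall j, 0 <= G j) -> G i <= \sum_j G j.
Proof. by move=> G_ge0; rewrite (bigD1 i) //= lerDl sumr_ge0. Qed.

Lemma mnorm_ge0 L A : 0 <= mnorm L A.
Proof.
case: L => /=; [|exact: sqrtr_ge0|exact: bigmax_ge_id].
by apply: sumr_ge0 => *; apply: sumr_ge0.
Qed.

Lemma entry_le_mnorm L A i j : `|A i j| <= mnorm L A.
Proof.
case: L => /=.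
- apply: le_trans (ler_sum_term (fun i => \sum_(j < n) `|A i j|) i _) => /=.
    exact: (ler_sum_term (fun j => `|A i j|)).
  by move=> k; apply: sumr_ge0.
- rewrite -[X in X <= _]normr_id -sqrtr_sqr ler_sqrt;
    last by do 2!(apply: sumr_ge0 => ? _); exact: sqr_ge0.
  apply: le_trans (ler_sum_term (fun i => \sum_(j < n) `|A i j| ^+ 2) i _) => /=.
    by apply: (ler_sum_term (fun j => `|A i j| ^+ 2)) => k; exact: sqr_ge0.
  by move=> k; apply: sumr_ge0 => ? _; exact: sqr_ge0.
- apply: le_trans (le_bigmax 0 (fun i => \big[Num.max/0]_(j < n) `|A i j|) i).
  exact: (le_bigmax 0 (fun j => `|A i j|)).
Qed.

(* A triangle inequality in which the perturbation is measured in L1; it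
   avoids having to prove Minkowski's inequality for L2. *)
Lemma mnormD_le_L1 L A B : mnorm L (A + B) <= mnorm L A + mnorm L1 B.
Proof.
case: L => /=.
- rewrite -big_split /=; apply: ler_sum => i _.
  rewrite -big_split /=; apply: ler_sum => j _; rewrite mxE; exact: ler_normD.
- set s := Num.sqrt (\sum_(i < n) \sum_(j < n) `|A i j| ^+ 2).
  set S := \sum_(i < n) \sum_(j < n) `|B i j|.
  have s_ge0 : 0 <= s := sqrtr_ge0 _.
  have S_ge0 : 0 <= S := mnorm_ge0 L1 B.
  rewrite -(ger0_norm (addr_ge0 s_ge0 S_ge0)) -sqrtr_sqr ler_sqrt;
    last exact: sqr_ge0.
  have -> : (s + S) ^+ 2 = s ^+ 2 + (2 * s + S) * S by ring.
  rewrite sqr_sqrtr; last by do 2!(apply: sumr_ge0 => * ); exact: sqr_ge0.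
  rewrite [X in _ <= _ + X]mulr_sumr -big_split /=; apply: ler_sum => i _.
  rewrite mulr_sumr -big_split /=; apply: ler_sum => j _; rewrite mxE.
  have Aij_le_s : `|A i j| <= s := entry_le_mnorm L2 A i j.
  have Bij_le_S : `|B i j| <= S := entry_le_mnorm L1 B i j.
  have := ler_normD (A i j) (B i j).
  move: Aij_le_s Bij_le_S (normr_ge0 (A i j + B i j)) (normr_ge0 (A i j))
    (normr_ge0 (B i j)).
  set x := `|_ + _|; set a := `|A i j|; set b := `|B i j| => *.
  (* x^2 <= (a + b)^2 = a^2 + 2ab + b^2 <= a^2 + (2s + S) b *)
  have : 0 <= (a + b - x) * (a + b + x) by apply: mulr_ge0; lra.
  have : 0 <= (s - a) * b by apply: mulr_ge0; lra.
  have : 0 <= (S - b) * b by apply: mulr_ge0; lra.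
  nra.
- have rhs_ge0 : 0 <= mnorm Linf A + mnorm L1 B by rewrite addr_ge0 ?mnorm_ge0.
  apply: bigmax_le => // i _; apply: bigmax_le => // j _.
  rewrite mxE; apply: le_trans (ler_normD _ _) _; apply: lerD.
    exact: (entry_le_mnorm Linf A i j).
  exact: (entry_le_mnorm L1 B i j).
Qed.

Lemma mnorm0 L : mnorm L (0 : 'M[R]_n) = 0.
Proof.
apply/eqP; rewrite eq_le mnorm_ge0 andbT.
case: L => /=.
- by rewrite big1 // => i _; rewrite big1 // => j _; rewrite mxE normr0.
- by rewrite big1 ?sqrtr0 // => i _; rewrite big1 // => j _; rewrite mxE normr0 expr0n.
- by do 2!(apply: bigmax_le => // ? _); rewrite mxE normr0.
Qed.

Lemma mnorm_le_L1 L A : mnorm L A <= mnorm L1 A.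
Proof. by have := mnormD_le_L1 L 0 A; rewrite add0r mnorm0 add0r. Qed.

Lemma mnormL1_scalar (t : R) : mnorm L1 (t%:M : 'M[R]_n) = n%:R * `|t|.
Proof.
rewrite /= -[n in n%:R]card_ord mulr_natl -sumr_const; apply: eq_bigr => i _.
rewrite (bigD1 i) //= big1 => [|j /negbTE ji]; first by rewrite mxE eqxx addr0.
by rewrite mxE eq_sym ji mulr0n normr0.
Qed.

End EntrywiseNorms.

Lemma horner_bounded {R : numDomainType} (q : {poly R}) (K : R) : 0 <= K ->
  exists2 B, 0 <= B & forall s, `|s| <= K -> `|q.[s]| <= B.
Proof.
move=> K_ge0; elim/poly_ind: q => [|p c [B B_ge0 pB]].
  by exists 0 => // s _; rewrite horner0 normr0.
exists (B * K + `|c|) => [|s sK]; first by rewrite addr_ge0 ?mulr_ge0.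
rewrite hornerMXaddC; apply: le_trans (ler_normD _ _) _.
by rewrite normrM lerD2r ler_pM ?pB.
Qed.

Section PolyLipschitzBounded.
Context {R : realType}.

Lemma eval2_bounded (p : {poly {poly R}}) (K : R) : 0 <= K ->
  exists2 B, 0 <= B &
    forall s t, `|s| <= K -> `|t| <= K -> `|eval2 p s t| <= B.
Proof.
move=> K_ge0; elim/poly_ind: p => [|p c [B B_ge0 pB]].
  by exists 0 => // s t _ _; rewrite /eval2 !horner0 normr0.
have [Bc Bc_ge0 cB] := horner_bounded c K K_ge0.
exists (B * K + Bc) => [|s t sK tK]; first by rewrite addr_ge0 ?mulr_ge0.
rewrite /eval2 hornerMXaddC hornerD hornerM hornerC.
apply: le_trans (ler_normD _ _) _; apply: lerD; last exact: cB.
by rewrite normrM ler_pM ?pB.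
Qed.

Lemma sum_eval2_bounded m (fs : nat -> {poly {poly R}}) (K : R) : 0 <= K ->
  exists B, forall s t, `|s| <= K -> `|t| <= K ->
    \sum_(i < m) `|eval2 (fs i) s t| <= B.
Proof.
move=> K_ge0; elim: m => [|m [B sumB]]; first by exists 0 => *; rewrite big_ord0.
have [B' _ fsB'] := eval2_bounded (fs m) K K_ge0.
by exists (B + B') => s t sK tK; rewrite big_ord_recr lerD ?sumB ?fsB'.
Qed.

(* Within L1-distance 1 of x0 every power of the distance is at most 1, so
   the Lipschitz bound reduces to a bound on the coefficient polynomials. *)
Lemma poly_lipschitz_locally_bounded {n : nat} {Lp Ls : Lnorm_kind}
    {F : 'M[R]_n -> 'M[R]_n} (x0 : 'M[R]_n) :
  poly_lipschitz Lp Ls F ->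
  exists C, forall x, mnorm L1 (x - x0) <= 1 -> mnorm Ls (F x) <= C.
Proof.
move=> [N [fs F_lip]].
pose K := mnorm Lp x0 + 1.
have K_ge0 : 0 <= K by rewrite addr_ge0 ?mnorm_ge0.
have [B sumB] := sum_eval2_bounded N.+1 fs K K_ge0.
exists (B + mnorm L1 (F x0)) => x near_x.
rewrite -(subrK (F x0) (F x)); apply: le_trans (mnormD_le_L1 _ _ _) _.
rewrite lerD2r; apply: le_trans (F_lip x x0) _.
have d_ge0 : 0 <= mnorm Lp (x - x0) := mnorm_ge0 _ _.
have d_le1 : mnorm Lp (x - x0) <= 1 := le_trans (mnorm_le_L1 _ _) near_x.
have x_le_K : `|mnorm Lp x| <= K.
  rewrite ger0_norm ?mnorm_ge0 // -(addrNK x0 x) [_ + x0]addrC.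
  by apply: le_trans (mnormD_le_L1 _ _ _) _; rewrite lerD2l.
have x0_le_K : `|mnorm Lp x0| <= K by rewrite ger0_norm ?mnorm_ge0 ?lerDl.
apply: le_trans (sumB _ _ x_le_K x0_le_K); apply: ler_sum => i _.
rewrite -[X in _ <= X]mulr1; apply: le_trans (ler_norm _) _.
by rewrite normrM ler_wpM2l // ger0_norm ?exprn_ge0 ?exprn_ile1.
Qed.

End PolyLipschitzBounded.

Lemma exists_nonroot_in_interval {R : numFieldType} (p : {poly R}) {e : R} :
  p != 0 -> 0 < e -> exists t, [/\ 0 < t, t <= e & ~~ root p t].
Proof.
move=> p_neq0 e_gt0.
pose ts := [seq e / (k.+1)%:R | k <- iota 0 (size p)].
have ts_uniq : uniq ts.
  rewrite map_inj_uniq ?iota_uniq // => k l.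
  move/(congr1 (fun y => y^-1 * e)); rewrite /= !invf_div !divfK ?gt_eqF //.
  by move/eqP; rewrite eqr_nat eqSS => /eqP.
have : ~~ all (root p) ts.
  apply/negP => ts_roots; have := max_poly_roots p_neq0 ts_roots ts_uniq.
  by rewrite size_map size_iota ltnn.
case/allPn => _ /mapP [k _ ->] not_root; exists (e / (k.+1)%:R); split => //.
  by rewrite divr_gt0 ?ltr0n.
by rewrite ler_pdivrMr ?ltr0n // ler_peMr ?ler1n // ltW.
Qed.

Section LeftKernel.
Context {F : fieldType} {n : nat}.
Implicit Types (A : 'M[F]_n).

Lemma nonunitmx_left_kernel A : A \notin unitmx ->
  exists2 v : 'rV[F]_n, v != 0 & v *m A = 0.
Proof.
rewrite -row_free_unit -kermx_eq0 => ker_neq0.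
have [i row_neq0] : exists i, row i (kermx A) != 0.
  apply/existsP; apply: contraR ker_neq0 => /existsPn rows0.
  by apply/eqP/row_matrixP => i; rewrite row0; apply/eqP/negPn/rows0.
by exists (row i (kermx A)); rewrite // -row_mul mulmx_ker row0.
Qed.

Lemma unitmx_add_scalar A (t : F) : ~~ root (char_poly (- A)) t ->
  A + t%:M \in unitmx.
Proof.
apply: contraR => /(nonunitmx_left_kernel _) [w w_neq0 wx0].
rewrite -eigenvalue_root_char; apply/eigenvalueP; exists w => //.
move/eqP: wx0; rewrite mulmxDr mul_mx_scalar addr_eq0 => /eqP wA.
by rewrite mulmxN wA opprK.
Qed.

End LeftKernel.

Section InverseBlowUp.
Context {R : realType} {n : nat}.
Implicit Types (A x : 'M[R]_n).

(* From v A = 0 we get v = t (v (A + t I)^-1), so t times the largest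
   entry of column j of (A + t I)^-1 controls v_j. *)
Lemma invmx_column_lower_bound A (v : 'rV[R]_n) j (t : R) :
  v *m A = 0 -> 0 < t -> A + t%:M \in unitmx ->
  exists k, `|v 0 j| <= t * (\sum_l `|v 0 l|) * `|invmx (A + t%:M) k j|.
Proof.
move=> vA0 t_gt0 x_unit; set x := A + t%:M.
have v_eq : v = t *: (v *m invmx x).
  by rewrite -{1}(mulmxK x_unit v) mulmxDr vA0 add0r mul_mx_scalar scalemxAl.
case: (@arg_maxP _ _ _ j xpredT (fun k => `|invmx x k j|) isT) => k _ k_max.
exists k; rewrite {1}v_eq !mxE normrM gtr0_norm // -mulrA ler_wpM2l ?(ltW t_gt0) //.
rewrite mulr_suml; apply: le_trans (ler_norm_sum _ _ _) _; apply: ler_sum => l _.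
by rewrite normrM ler_wpM2l //; exact: k_max.
Qed.

Lemma invmx_unbounded_near_nonunit A (eps K : R) :
  A \notin unitmx -> 0 < eps ->
  exists x, [/\ x \in unitmx, mnorm L1 (x - A) <= eps
              & exists i j, K < `|invmx x i j|].
Proof.
move=> A_nonunit eps_gt0.
have [v v_neq0 vA0] := nonunitmx_left_kernel _ A_nonunit.
have [j vj_neq0] : exists j, v 0 j != 0.
  apply/existsP; apply: contraR v_neq0 => /existsPn v0.
  by apply/eqP/rowP => k; rewrite mxE; apply/eqP/negPn/v0.
pose V := \sum_l `|v 0 l|.
have vj_gt0 : 0 < `|v 0 j| by rewrite normr_gt0.
have V_gt0 : 0 < V.
  by apply: lt_le_trans vj_gt0 (ler_sum_term (fun l => `|v 0 l|) j _).
pose tmax := Num.min (eps / n.+1%:R) (`|v 0 j| / ((`|K| + 1) * V)).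
have tmax_gt0 : 0 < tmax.
  by rewrite lt_min !divr_gt0 ?ltr0n ?mulr_gt0 ?ltr_wpDl.
have charpoly_neq0 : char_poly (- A) != 0 by rewrite monic_neq0 ?char_poly_monic.
have [t [t_gt0 t_le nonroot]] := exists_nonroot_in_interval _ charpoly_neq0 tmax_gt0.
have x_unit := unitmx_add_scalar _ _ nonroot.
exists (A + t%:M); split => //.
  rewrite addrC addKr mnormL1_scalar gtr0_norm //.
  have : t <= eps / n.+1%:R by apply: le_trans t_le _; rewrite ge_min lexx.
  rewrite ler_pdivlMr ?ltr0n // => t_le_eps.
  by apply: le_trans _ t_le_eps; rewrite mulrC ler_wpM2l ?(ltW t_gt0) ?ler_nat.
have [k vj_le] := invmx_column_lower_bound _ _ j _ vA0 t_gt0 x_unit.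
exists k, j.
have : t <= `|v 0 j| / ((`|K| + 1) * V) by apply: le_trans t_le _; rewrite ge_min lexx orbT.
rewrite ler_pdivlMr ?mulr_gt0 ?ltr_wpDl // => t_small.
have tV_gt0 : 0 < t * V by rewrite mulr_gt0.
have : `|K| + 1 <= `|invmx (A + t%:M) k j|.
  rewrite -(ler_pM2l tV_gt0); apply: le_trans _ vj_le.
  by rewrite -mulrA [V * _]mulrC.
by have := ler_norm K; lra.
Qed.

End InverseBlowUp.

Theorem theorem3p7 (R : realType) (n : nat) (hn : (0 < n)%N) (L : Lnorm_kind)
  (M : 'M[R]_n -> Prop) (a : 'M[R]_n) (c : R)
  (hball : forall x : 'M[R]_n, mnorm L (x - a) < c -> M x)
  (hsing : exists x0 : 'M[R]_n, mnorm L (x0 - a) < c /\ \rank x0 = n.-1)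
  (F : 'M[R]_n -> 'M[R]_n)
  (hF : exists Lp Ls : Lnorm_kind, poly_lipschitz Lp Ls F) :
  forall E : R, 0 < E ->
    exists x : 'M[R]_n, M x /\ x \in unitmx /\ E < mnorm L (invmx x - F x).
Proof.
move=> E E_gt0; have [x0 [x0_in_ball x0_rank]] := hsing.
have x0_nonunit : x0 \notin unitmx.
  by rewrite -row_free_unit /row_free x0_rank ltn_eqF // ltn_predL.
have [Lp [Ls F_lip]] := hF.
have [C F_bounded] := poly_lipschitz_locally_bounded x0 F_lip.
pose eps := Num.min 1 ((c - mnorm L (x0 - a)) / 2).
have eps_gt0 : 0 < eps by rewrite lt_min ltr01 divr_gt0 ?subr_gt0.
have [x [x_unit x_near [i [j inv_large]]]] :=
  invmx_unbounded_near_nonunit _ _ (E + C) x0_nonunit eps_gt0.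
exists x; split; [apply: hball | split => //].
  have -> : x - a = (x0 - a) + (x - x0) by rewrite [RHS]addrC addrA subrK.
  apply: le_lt_trans (mnormD_le_L1 _ _ _) _.
  have : eps <= (c - mnorm L (x0 - a)) / 2 by rewrite ge_min lexx orbT.
  lra.
have Fx_le : `|F x i j| <= C.
  apply: le_trans (entry_le_mnorm Ls _ i j) (F_bounded x _).
  by apply: le_trans x_near _; rewrite ge_min lexx.
apply: lt_le_trans (entry_le_mnorm L _ i j); rewrite !mxE.
by have := ler_normD (invmx x i j - F x i j) (F x i j); rewrite subrK; lra.
Qed.
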